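(* Let $P=\frac{1}{\sqrt2}\begin{bmatrix}1&1\\0&0\end{bmatrix}$, $Q=\frac{1}{\sqrt2}\begin{bmatrix}0&0\\1&-1\end{bmatrix}$, $R=\sqrt2\,PQ=\frac{1}{\sqrt2}\begin{bmatrix}1&-1\\0&0\end{bmatrix}$, $S=\sqrt2\,QP=\frac{1}{\sqrt2}\begin{bmatrix}0&0\\1&1\end{bmatrix}$. For integers $l,m\ge0$ with $l+m=n\ge1$, let $\Xi(l,m)$ denote the sum of all distinct products $A_1A_2\cdots A_n$ with each $A_j\in\{P,Q\}$, exactly $l$ of them equal to $P$ and exactly $m$ equal to $Q$ (so $\binom{n}{l}$ terms). Then: (i) if $\min\{l,m\}\ge1$, $$\Xi(l,m)=\Big(\tfrac{1}{\sqrt2}\Big)^{n-1}(-1)^m\sum_{\gamma=1}^{\min\{l,m\}}(-1)^\gamma\binom{l-1}{\gamma-1}\binom{m-1}{\gamma-1}\Big[\tfrac{l-\gamma}{\gamma}P-\tfrac{m-\gamma}{\gamma}Q+R+S\Big];$$ (ii) if $l=n\ge1$ and $m=0$, $\Xi(l,0)=\big(\tfrac{1}{\sqrt2}\big)^{l-1}P$; (iii) if $l=0$ and $m=n\ge1$, $\Xi(0,m)=\big(\tfrac{1}{\sqrt2}\big)^{m-1}(-1)^{m+1}Q$.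
   Context: $P$ and $Q$ are the two parts of the Hadamard matrix $H=\frac{1}{\sqrt2}\begin{bmatrix}1&1\\1&-1\end{bmatrix}=P+Q$ governing the one-dimensional Hadamard walk, and $\Xi(l,m)$ is the coefficient of the word-sum appearing in the expansion of $H^n=(P+Q)^n$ (a ''quantum Pascal's triangle''). *)

From HB Require Import structures.
From mathcomp Require Import all_boot all_order all_algebra.
Set Implicit Arguments. Unset Strict Implicit. Unset Printing Implicit Defensive.
Import Order.TTheory GRing.Theory Num.Theory.
Local Open Scope ring_scope.

Section Hadamard.
Variable R : rcfType.

Definition isq2 : R := (Num.sqrt (2%:R : R))^-1.

Definition Pm : 'M[R]_2 :=
  \matrix_(i < 2, j < 2) (if i == 0 :> nat then isq2 else 0).
Definition Qm : 'M[R]_2 :=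
  \matrix_(i < 2, j < 2)
    (if i == 1 :> nat then (if j == 0 :> nat then isq2 else - isq2) else 0).
Definition Rm : 'M[R]_2 := Num.sqrt (2%:R : R) *: (Pm *m Qm).
Definition Sm : 'M[R]_2 := Num.sqrt (2%:R : R) *: (Qm *m Pm).

Definition Xi (l m : nat) : 'M[R]_2 :=
  \sum_(w : (l + m).-tuple bool | count id w == l)
     \prod_(b <- w) (if b then Pm else Qm).
End Hadamard.

From HB Require Import structures.
From mathcomp Require Import all_boot all_order all_algebra.
From mathcomp Require Import ring zify.
Set Implicit Arguments. Unset Strict Implicit. Unset Printing Implicit Defensive.
Import Order.TTheory GRing.Theory Num.Theory.
Local Open Scope ring_scope.

(* In the basis sqrt 2 P, sqrt 2 Q, sqrt 2 R, sqrt 2 S of the 2x2 matrices, left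
   multiplication by P and Q acts on coordinates (a, b, r, s) by
   (a + s, 0, b + r, 0) / sqrt 2 and (0, r - b, 0, a - s) / sqrt 2.  Splitting off
   the first letter gives Xi(l, m) = P Xi(l-1, m) + Q Xi(l, m-1), so the
   coordinates of Xi(l, m) obey Pascal-type recursions.  They are solved by
   alternating sums of products C(l-1, k-1) C(m-1, k-1) of composition numbers;
   for l, m >= 1 these are the sums of the statement, once C(l-1, g-1) (l-g)/g
   is rewritten as C(l-1, g). *)

Lemma sum_nat_supported (V : nmodType) (N K : nat) (F : nat -> V) :
  (K < N)%N -> F 0%N = 0 -> (forall k, (K < k)%N -> F k = 0) ->
  \sum_(0 <= k < N) F k = \sum_(1 <= k < K.+1) F k.
Proof.
move=> ltKN F0 F_gtK.
rewrite (big_cat_nat _ (n := K.+1)) //= big_ltn // F0 add0r.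
rewrite [X in _ + X]big1_seq ?addr0 // => k /andP[_].
by rewrite mem_index_iota => /andP[/F_gtK].
Qed.

Lemma natr_bin_ratio (R : numFieldType) (l g : nat) : (0 < g)%N ->
  ('C(l.-1, g.-1))%:R * ((l - g)%:R / g%:R) = ('C(l.-1, g))%:R :> R.
Proof.
case: g => [//|g] _ /=; have g1_neq0 : (g.+1%:R : R) != 0 by rewrite pnatr_eq0.
have -> : (l - g.+1 = l.-1 - g)%N by lia.
by rewrite mulrA -natrM mulnC -mul_bin_left natrM mulrAC divff ?mul1r.
Qed.

(* [ncomp n k] is the number of compositions of n into k positive parts; the
   convention [ncomp 0 0 = 1] treats words without P or without Q uniformly. *)
Definition ncomp (n k : nat) : nat :=
  if n is n'.+1 then (if k is k'.+1 then 'C(n', k') else 0) else (k == 0 : nat).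
Arguments ncomp : simpl never.

Lemma ncompSS n k : ncomp n.+1 k.+1 = (ncomp n k.+1 + ncomp n k)%N.
Proof. by rewrite /ncomp; case: n => [|n]; case: k => [|k] //=; rewrite ?bin0 ?binS ?addn0. Qed.

Lemma ncomp_small n k : (n < k)%N -> ncomp n k = 0%N.
Proof. by rewrite /ncomp; case: n k => [|n] [|k] //; rewrite ltnS => /bin_small. Qed.

Lemma ncomp0_mul l m : (0 < l + m)%N -> (ncomp l 0 * ncomp m 0 = 0)%N.
Proof. by rewrite /ncomp; case: l => [|l] //; case: m. Qed.

Section CompositionSums.
Variable R : pzRingType.

(* For N large, [(-1) ^+ j * coef N i j l m] counts, with sign (-1)^(number of
   factors QQ), the words with l letters P and m letters Q that have [i + k]
   runs of P and [j + k] runs of Q for some k.  The product of a word is such a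
   sign times (1/sqrt 2)^(l+m-1) times P, Q, R or S according to its first and
   last letters, so (i, j) = (1, 0), (0, 1), (0, 0) give the coordinates of
   Xi(l, m). *)
Definition coef (N i j l m : nat) : R :=
  \sum_(0 <= k < N) (-1) ^+ (m + k) * (ncomp l (i + k) * ncomp m (j + k))%:R.

Lemma coefSl N i j l m : coef N i.+1 j l.+1 m = coef N i.+1 j l m + coef N i j l m.
Proof.
rewrite /coef -big_split; apply: eq_bigr => k _.
by rewrite !addSn ncompSS mulnDl natrD mulrDr.
Qed.

Lemma coefSr N i j l m : coef N i j.+1 l m.+1 = - (coef N i j.+1 l m + coef N i j l m).
Proof.
rewrite /coef -big_split -sumrN; apply: eq_bigr => k _.
by rewrite !addSn ncompSS mulnDr natrD exprS mulN1r mulNr mulrDr.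
Qed.

Lemma coef_shift N i j l m :
  coef N.+1 i j l m = (-1) ^+ m * (ncomp l i * ncomp m j)%:R - coef N i.+1 j.+1 l m.
Proof.
rewrite /coef big_nat_recl // !addn0 -sumrN; congr (_ + _); apply: eq_bigr => k _.
by rewrite !addnS !addSn exprS mulN1r mulNr.
Qed.

Lemma coef_widen N i j l m : (l < i + N)%N -> coef N.+1 i j l m = coef N i j l m.
Proof. by move=> ltl; rewrite /coef big_nat_recr //= ncomp_small // mul0n mulr0 addr0. Qed.

Lemma coef_l0 N i j m : coef N.+1 i j 0 m = (-1) ^+ m * (ncomp 0 i * ncomp m j)%:R.
Proof.
rewrite /coef big_nat_recl // !addn0 big1 ?addr0 // => k _.
by rewrite ncomp_small ?mul0n ?mulr0 // addnS.
Qed.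

Lemma coef_m0 N i j l : coef N.+1 i j l 0 = (ncomp l i * ncomp 0 j)%:R.
Proof.
rewrite /coef big_nat_recl // !addn0 expr0 mul1r big1 ?addr0 // => k _.
by rewrite [ncomp 0 _]ncomp_small ?muln0 ?mulr0 // addnS.
Qed.

Lemma coef00Sl N l m : (0 < l + m)%N -> (l < N)%N ->
  coef N.+1 0 0 l.+1 m = coef N.+1 0 0 l m - coef N.+1 0 1 l m.
Proof.
move=> lm_gt0 ltlN.
rewrite [LHS]coef_shift [coef N.+1 0 0 l m]coef_shift [coef N.+1 0 1 l m]coef_widen //.
by rewrite coefSl !ncomp0_mul // !mulr0 !sub0r opprD.
Qed.

Lemma coef00Sr N l m : (0 < l + m)%N -> (l <= N)%N ->
  coef N.+1 0 0 l m.+1 = coef N.+1 1 0 l m - coef N.+1 0 0 l m.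
Proof.
move=> lm_gt0 lelN.
rewrite [LHS]coef_shift [coef N.+1 0 0 l m]coef_shift [coef N.+1 1 0 l m]coef_widen //.
by rewrite coefSr !ncomp0_mul ?addnS // !mulr0 !sub0r !opprK addrC.
Qed.

Lemma coef_binomial N i j l m :
  (0 < l)%N -> (0 < m)%N -> (i == 0%N) || (j == 0%N) -> (minn l m < N)%N ->
  coef N i j l m = (-1) ^+ m * \sum_(1 <= g < (minn l m).+1)
                     (-1) ^+ g * ('C(l.-1, (i + g).-1) * 'C(m.-1, (j + g).-1))%:R.
Proof.
case: l => [//|l] _; case: m => [//|m] _ ij0 ltN.
rewrite /coef (sum_nat_supported (K := minn l.+1 m.+1)) // ?mulr_sumr.
- apply: eq_big_nat => -[//|g] _.
  by rewrite !addnS /ncomp /= -addnS exprD mulrA.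
- by case/orP: ij0 => /eqP->; rewrite /ncomp !addn0 ?mul0n ?muln0 mulr0.
move=> k; rewrite gtn_min => /orP[ltlk | ltmk].
  by rewrite ncomp_small ?mul0n ?mulr0 // ltn_addl.
by rewrite [ncomp m.+1 _]ncomp_small ?muln0 ?mulr0 // ltn_addl.
Qed.
End CompositionSums.

Section HadamardWords.
Variable R : rcfType.
Local Notation c := (isq2 R).

Local Ltac mx2_eq :=
  apply/matrixP => -[[|[|//]] ?] [[|[|//]] ?];
  rewrite !mxE /= ?big_ord_recl ?big_ord0 /= ?mxE /=.

(* [Xi] with the word length as a separate argument, so that splitting off a
   letter is well typed. *)
Definition wordsum n l : 'M[R]_2 :=
  \sum_(w : n.-tuple bool | count id w == l) \prod_(b <- w) (if b then Pm R else Qm R).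

Lemma Xi_wordsum l m : Xi R l m = wordsum (l + m) l.
Proof. by []. Qed.

Lemma wordsumS n l :
  wordsum n.+1 l = (if l is l'.+1 then Pm R * wordsum n l' else 0) + Qm R * wordsum n l.
Proof.
rewrite /wordsum (reindex (fun p : bool * n.-tuple bool => [tuple of p.1 :: p.2])) /=.
  transitivity (\sum_(b : bool) \sum_(t : n.-tuple bool | count id (b :: t) == l)
                  \prod_(x <- b :: t) (if x then Pm R else Qm R)).
    by rewrite pair_big_dep; apply: eq_bigl => -[b t].
  rewrite big_bool /=.
  under eq_bigr do rewrite big_cons.
  under [X in _ + X = _]eq_bigr do rewrite big_cons.
  rewrite -!mulr_sumr; case: l => [|l]; last by congr (_ * _ + _ * _); apply: eq_bigl.
  by rewrite [X in Pm R * X]big_pred0 ?mulr0.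
exists (fun t : n.+1.-tuple bool => (thead t, [tuple of behead t])) => [[b t]|t] _ /=.
  by congr pair; apply: val_inj.
by apply: val_inj => /=; case: t => [[|x s]].
Qed.

Lemma wordsum_gt n l : (n < l)%N -> wordsum n l = 0.
Proof.
move=> ltnl; rewrite /wordsum big_pred0 // => w; apply/negbTE; rewrite neq_ltn.
by have := count_size id w; rewrite size_tuple => /leq_ltn_trans ->.
Qed.

Lemma wordsum0 : wordsum 0 0 = 1.
Proof.
rewrite /wordsum (big_pred1 [tuple]) ?big_nil // => w.
by rewrite tuple0 /= eqxx.
Qed.

Lemma Pm_sqr : Pm R * Pm R = c *: Pm R.
Proof. by rewrite -mulmxE; mx2_eq; ring. Qed.

Lemma Qm_sqr : Qm R * Qm R = - c *: Qm R.
Proof. by rewrite -mulmxE; mx2_eq; ring. Qed.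

Lemma wordsum_nn n : wordsum n.+1 n.+1 = c ^+ n *: Pm R.
Proof.
elim: n => [|n IH]; rewrite wordsumS [X in Qm R * X]wordsum_gt // mulr0 addr0.
  by rewrite wordsum0 mulr1 scale1r.
by rewrite IH -scalerAr Pm_sqr scalerA -exprSr.
Qed.

Lemma wordsum_n0 n : wordsum n.+1 0 = (c ^+ n * (-1) ^+ n) *: Qm R.
Proof.
elim: n => [|n IH]; rewrite wordsumS add0r.
  by rewrite wordsum0 mulr1 mulr1 scale1r.
by rewrite IH -scalerAr Qm_sqr scalerA !exprSr; congr (_ *: _); ring.
Qed.

(* [hmx a b r s] is [sqrt 2 *: (a P + b Q + r R + s S)]. *)
Definition hmx (a b r s : R) : 'M[R]_2 :=
  \matrix_(i < 2, j < 2)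
    if i == 0 :> nat then (if j == 0 :> nat then a + r else a - r)
    else (if j == 0 :> nat then b + s else s - b).

Lemma sqrt2_isq2 : Num.sqrt 2%:R * c = 1.
Proof. by rewrite /isq2 divff // gt_eqF // sqrtr_gt0 ltr0n. Qed.

Lemma Pm_hmx : Pm R = c *: hmx 1 0 0 0.
Proof. by mx2_eq; ring. Qed.

Lemma Qm_hmx : Qm R = c *: hmx 0 1 0 0.
Proof. by mx2_eq; ring. Qed.

Lemma hmxP_mulmx a b r s : hmx 1 0 0 0 *m hmx a b r s = hmx (a + s) 0 (b + r) 0.
Proof. by mx2_eq; ring. Qed.

Lemma hmxQ_mulmx a b r s : hmx 0 1 0 0 *m hmx a b r s = hmx 0 (r - b) 0 (a - s).
Proof. by mx2_eq; ring. Qed.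

Lemma Rm_hmx : Rm R = c *: hmx 0 0 1 0.
Proof.
rewrite /Rm Pm_hmx Qm_hmx -scalemxAl -scalemxAr !scalerA hmxP_mulmx.
by rewrite sqrt2_isq2 mul1r !addr0.
Qed.

Lemma Sm_hmx : Sm R = c *: hmx 0 0 0 1.
Proof.
rewrite /Sm Pm_hmx Qm_hmx -scalemxAl -scalemxAr !scalerA hmxQ_mulmx.
by rewrite sqrt2_isq2 mul1r !subr0.
Qed.

Lemma Pm_mul_hmx k a b r s :
  Pm R * (k *: hmx a b r s) = (c * k) *: hmx (a + s) 0 (b + r) 0.
Proof. by rewrite Pm_hmx -mulmxE -scalemxAl -scalemxAr hmxP_mulmx scalerA. Qed.

Lemma Qm_mul_hmx k a b r s :
  Qm R * (k *: hmx a b r s) = (c * k) *: hmx 0 (r - b) 0 (a - s).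
Proof. by rewrite Qm_hmx -mulmxE -scalemxAl -scalemxAr hmxQ_mulmx scalerA. Qed.

Lemma hmxD a b r s a' b' r' s' :
  hmx a b r s + hmx a' b' r' s' = hmx (a + a') (b + b') (r + r') (s + s').
Proof. by mx2_eq; ring. Qed.

Lemma hmxZ k a b r s : k *: hmx a b r s = hmx (k * a) (k * b) (k * r) (k * s).
Proof. by mx2_eq; ring. Qed.

Lemma hmx_decomp a b r s :
  hmx a b r s = a *: hmx 1 0 0 0 + b *: hmx 0 1 0 0 + r *: hmx 0 0 1 0 + s *: hmx 0 0 0 1.
Proof. by mx2_eq; ring. Qed.

Lemma hmx_sum (I : Type) (t : seq I) (P : pred I) (a b r s : I -> R) :
  \sum_(i <- t | P i) hmx (a i) (b i) (r i) (s i) =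
  hmx (\sum_(i <- t | P i) a i) (\sum_(i <- t | P i) b i)
      (\sum_(i <- t | P i) r i) (\sum_(i <- t | P i) s i).
Proof.
under eq_bigr do rewrite hmx_decomp.
by rewrite !big_split /= -!scaler_suml -hmx_decomp.
Qed.

Local Notation xi N l m :=
  (hmx (coef R N 1 0 l m) (- coef R N 0 1 l m) (coef R N 0 0 l m) (coef R N 0 0 l m)).

Lemma wordsum_n0_hmx N n : wordsum n.+1 0 = c ^+ n.+1 *: xi N.+1 0 n.+1.
Proof.
rewrite wordsum_n0 Qm_hmx !coef_l0 scalerA !hmxZ /ncomp /=.
by congr (hmx _ _ _ _); rewrite ?bin0 !exprSr; ring.
Qed.

Lemma wordsum_nn_hmx N n : wordsum n.+1 n.+1 = c ^+ n.+1 *: xi N.+1 n.+1 0.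
Proof.
rewrite wordsum_nn Pm_hmx !coef_m0 scalerA -exprSr /ncomp /=.
by rewrite bin0 !(mul0n, muln0, mul1n, mulr0n, oppr0).
Qed.

Lemma wordsum_hmx N n l m : (l + m = n.+1)%N -> (n.+1 < N)%N ->
  wordsum n.+1 l = c ^+ n.+1 *: xi N.+1 l m.
Proof.
elim: n l m => [|n IH] [|l] [|m] // lm ltN.
1,4: by case: lm => ->; apply: wordsum_n0_hmx.
1,3: by rewrite addn0 in lm; case: lm => ->; apply: wordsum_nn_hmx.
  by lia.
rewrite wordsumS (IH l m.+1) ?(IH l.+1 m) ?Pm_mul_hmx ?Qm_mul_hmx -?exprS; [|lia|lia|lia|lia].
rewrite -scalerDr hmxD !(addr0, add0r); congr (_ *: hmx _ _ _ _).
- by rewrite coefSl.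
- by rewrite coefSr !opprK addrC.
- by rewrite coef00Sl 1?addrC //; lia.
- by rewrite coef00Sr //; lia.
Qed.

Lemma summand_hmx l m g : (0 < g)%N ->
  ((-1) ^+ g * ('C(l.-1, g.-1) * 'C(m.-1, g.-1))%:R) *:
    (((l - g)%:R / g%:R) *: Pm R - ((m - g)%:R / g%:R) *: Qm R + Rm R + Sm R)
  = c *: hmx ((-1) ^+ g * ('C(l.-1, g) * 'C(m.-1, g.-1))%:R)
             (- ((-1) ^+ g * ('C(l.-1, g.-1) * 'C(m.-1, g))%:R))
             ((-1) ^+ g * ('C(l.-1, g.-1) * 'C(m.-1, g.-1))%:R)
             ((-1) ^+ g * ('C(l.-1, g.-1) * 'C(m.-1, g.-1))%:R).
Proof.
move=> g_gt0; rewrite !natrM -!(natr_bin_ratio _ _ g_gt0) Pm_hmx Qm_hmx Rm_hmx Sm_hmx.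
by mx2_eq; ring.
Qed.

Lemma binomial_sum_hmx N l m : (0 < l)%N -> (0 < m)%N -> (minn l m < N)%N ->
  (-1) ^+ m *: \sum_(1 <= g < (minn l m).+1)
     ((-1) ^+ g * ('C(l.-1, g.-1) * 'C(m.-1, g.-1))%:R) *:
       (((l - g)%:R / g%:R) *: Pm R - ((m - g)%:R / g%:R) *: Qm R + Rm R + Sm R)
  = c *: xi N l m.
Proof.
move=> l_gt0 m_gt0 ltN.
under eq_big_nat => g /andP[g_gt0 _] do rewrite summand_hmx //.
rewrite -scaler_sumr hmx_sum scalerA mulrC -scalerA; congr (_ *: _).
by rewrite hmxZ sumrN !coef_binomial // mulrN.
Qed.
End HadamardWords.

Unset Implicit Arguments.
Theorem theorem3 (R : rcfType) (l m : nat) :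
  [/\ (0 < minn l m)%N ->
        Xi R l m =
        (isq2 R ^+ (l + m).-1 * (-1) ^+ m) *:
          \sum_(1 <= g < (minn l m).+1)
            ((-1) ^+ g * ('C(l.-1, g.-1) * 'C(m.-1, g.-1))%:R) *:
              (((l - g)%:R / g%:R) *: Pm R - ((m - g)%:R / g%:R) *: Qm R
               + Rm R + Sm R),
      (0 < l)%N -> m = 0%N -> Xi R l m = isq2 R ^+ l.-1 *: Pm R
    & l = 0%N -> (0 < m)%N ->
        Xi R l m = (isq2 R ^+ m.-1 * (-1) ^+ m.+1) *: Qm R].
Proof.
split.
- move=> lm_gt0; have [l_gt0 m_gt0] : (0 < l)%N /\ (0 < m)%N by lia.
  have [n lm] : {n | (l + m = n.+1)%N} by exists (l + m).-1; lia.
  rewrite Xi_wordsum lm (wordsum_hmx R (N := n.+2) lm) // -scalerA.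
  by rewrite (binomial_sum_hmx R (N := n.+3)) ?scalerA -?exprSr //; lia.
- by case: l => [//|l] _ ->; rewrite Xi_wordsum addn0 wordsum_nn.
- move=> ->; case: m => [//|m] _; rewrite Xi_wordsum wordsum_n0.
  by rewrite !exprS !mulN1r opprK.
Qed.
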